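(* Let $X$ be a graph with Hamiltonian $M\in\{A,L,Q\}$, let $s\in\mathbb{R}\setminus\{0\}$, and suppose the $s$-pair states $\mathbf u=\mathbf e_a+s\mathbf e_b$ and $\boldsymbol\mu=\mathbf e_\alpha+s\mathbf e_\beta$ are strongly cospectral with respect to $M$. If $s\neq1$, then every automorphism of $X$ that fixes $a$ and fixes $b$ also fixes $\alpha$ and fixes $\beta$. If $s=1$, then every automorphism of $X$ that fixes the set $\{a,b\}$ also fixes the set $\{\alpha,\beta\}$.
   Context: $A$, $L=D-A$, $Q=D+A$ are the adjacency, Laplacian, signless Laplacian matrices. An $s$-pair state is $\mathbf e_a+s\mathbf e_b$ with $a\neq b$ vertices. For $M=\sum_\lambda\lambda E_\lambda$ (orthogonal spectral projections), real vectors $\mathbf u,\boldsymbol\mu$ are strongly cospectral if $E_\lambda\mathbf u=\pm E_\lambda\boldsymbol\mu$ for every eigenvalue $\lambda$. *)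

From HB Require Import structures.
From mathcomp Require Import all_boot all_order all_algebra all_fingroup.
From mathcomp Require Import reals.
Set Implicit Arguments. Unset Strict Implicit. Unset Printing Implicit Defensive.
Import Order.TTheory GRing.Theory Num.Theory.
Local Open Scope ring_scope.

Definition simple_graph (n : nat) (e : rel 'I_n) : Prop :=
  (forall x y, e x y = e y x) /\ (forall x, e x x = false).

Section Mats.
Variables (R : realType) (n : nat) (e : rel 'I_n).

Definition adjmx : 'M[R]_n := \matrix_(i, j) (e i j)%:R.
Definition degmx : 'M[R]_n := \matrix_(i, j) ((i == j)%:R * (#|[set k | e i k]|)%:R).
Definition lapmx : 'M[R]_n := degmx - adjmx.
Definition slapmx : 'M[R]_n := degmx + adjmx.
End Mats.

Inductive hamiltonian := HamA | HamL | HamQ.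

Definition ham_mx (R : realType) (n : nat) (e : rel 'I_n) (h : hamiltonian) : 'M[R]_n :=
  match h with
  | HamA => adjmx R e
  | HamL => lapmx R e
  | HamQ => slapmx R e
  end.

(* orthogonal projection onto the eigenspace of M for lam:
   B^T (B B^T)^{-1} B, where the rows of B form a basis of the eigenspace *)
Definition eigproj (R : realType) (n : nat) (M : 'M[R]_n) (lam : R) : 'M[R]_n :=
  let B := row_base (eigenspace M lam) in
  B^T *m invmx (B *m B^T) *m B.

Definition strongly_cospectral (R : realType) (n : nat) (M : 'M[R]_n)
  (u mu : 'cV[R]_n) : Prop :=
  forall lam : R, eigenvalue M lam ->
    exists eps : R, (eps = 1 \/ eps = -1) /\
      eigproj M lam *m u = eps *: (eigproj M lam *m mu).

Definition basis_vec (R : realType) (n : nat) (a : 'I_n) : 'cV[R]_n :=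
  \col_i (i == a)%:R.
Definition pair_state (R : realType) (n : nat) (s : R) (a b : 'I_n) : 'cV[R]_n :=
  basis_vec R a + s *: basis_vec R b.

Definition graph_aut (n : nat) (e : rel 'I_n) (g : {perm 'I_n}) : Prop :=
  forall x y, e (g x) (g y) = e x y.

(* An automorphism g of X acts on vectors through the permutation matrix P of
   g^-1, which commutes with M and hence maps each eigenvector v (as a row) to
   the eigenvector v P of the same eigenvalue.  If P fixes u, strong
   cospectrality applied to v and to v P gives v (P mu - mu) = 0 for every
   eigenvector v; as the eigenvectors of the real symmetric matrix M span the
   space, P mu = mu.  For s <> 1, P u = u means that g fixes a and b, and
   P mu = mu that g fixes alpha and beta; for s = 1 these read g{a,b} = {a,b}
   and g{alpha,beta} = {alpha,beta}. *)

From HB Require Import structures.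
From mathcomp Require Import all_boot all_order all_algebra all_fingroup.
From mathcomp Require Import reals complex.
Set Implicit Arguments. Unset Strict Implicit. Unset Printing Implicit Defensive.
Import Order.TTheory GRing.Theory Num.Theory.
Local Open Scope ring_scope.

Section SymmetricSpectrum.
Variable R : rcfType.

Lemma self_dot_eq0 k (u : 'rV[R]_k) : (u *m u^T) 0 0 = 0 -> u = 0.
Proof.
rewrite !mxE => /eqP; rewrite psumr_eq0 => [/allP u0|j _]; last first.
  by rewrite mxE -expr2 sqr_ge0.
apply/rowP => j; have := u0 j (mem_index_enum _).
by rewrite !mxE -expr2 sqrf_eq0 => /eqP.
Qed.

Variables (n : nat) (M : 'M[R]_n.+1).
Hypothesis symM : M^T = M.

Lemma sym_char_poly_root_real (z : R[i]) :
  root (map_poly (real_complex R) (char_poly M)) z -> z = (complex.Re z)%:C%C.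
Proof.
rewrite map_char_poly -eigenvalue_root_char => /eigenvalueP [v vN v_neq0].
set N := map_mx (real_complex R) M in vN.
set vt := (v ^t* )%sesqui.
have N_herm : (N ^t* )%sesqui = N.
  apply/matrixP => i j; rewrite !mxE -[M in RHS]symM mxE.
  by apply/CrealP/complex_realP; exists (M j i).
have e1 : v *m N *m vt = z *: (v *m vt) by rewrite vN scalemxAl.
have e2 : v *m (N *m vt) = z^* *: (v *m vt).
  by rewrite -{1}N_herm /vt -map_mxM -trmx_mul vN linearZ /= map_mxZ -scalemxAr.
move: e2; rewrite mulmxA e1 => /matrixP/(_ 0 0).
rewrite [LHS]mxE [RHS]mxE -dotmxE => /eqP.
rewrite -subr_eq0 -mulrBl mulf_eq0 dnorm_eq0 (negbTE v_neq0) orbF.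
by rewrite subr_eq0 => /eqP zC; rewrite RRe_real //; apply/CrealP.
Qed.

Lemma sym_char_poly_split : exists rs : seq R, char_poly M = \prod_(r <- rs) ('X - r%:P).
Proof.
have [zs def_p] := closed_field_poly_normal (map_poly (real_complex R) (char_poly M)).
rewrite lead_coef_map (monicP (char_poly_monic M)) rmorph1 scale1r in def_p.
exists (map (@complex.Re R) zs); apply: (@map_poly_inj _ _ (real_complex R)).
rewrite def_p rmorph_prod big_map; apply: eq_big_seq => z z_zs.
rewrite rmorphB /= map_polyX map_polyC /= -sym_char_poly_root_real //.
by rewrite def_p root_prod_XsubC.
Qed.

Lemma eigen_orth_horner_split_eq0 (rs : seq R) (w : 'cV[R]_n.+1) :
  (forall (l : R) (v : 'rV_n.+1), v *m M = l *: v -> v *m w = 0) ->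
  horner_mx M (\prod_(r <- rs) ('X - r%:P)) *m w = 0 -> w = 0.
Proof.
elim: rs w => [|r rs IH] w w_orth; first by rewrite big_nil rmorph1 mul1mx.
rewrite big_cons mulrC rmorphM /= -mulmxE -mulmxA rmorphB /= horner_mx_X horner_mx_C.
move=> /IH w1_eq0.
have {w1_eq0}Mw : M *m w = r *: w.
  apply/eqP; rewrite -subr_eq0 -mul_scalar_mx -mulmxBl; apply/eqP/w1_eq0.
  move=> l v vM; rewrite mulmxA mulmxBr vM mul_mx_scalar -scalerBl -scalemxAl.
  by rewrite (w_orth l v vM) scaler0.
have wTM : w^T *m M = r *: w^T by rewrite -symM -trmx_mul Mw linearZ.
have : w^T = 0 by apply: self_dot_eq0; rewrite trmxK (w_orth _ _ wTM) mxE.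
by move/(congr1 trmx); rewrite trmxK trmx0.
Qed.

End SymmetricSpectrum.

Lemma sym_eigen_orth_eq0 (R : rcfType) n (M : 'M[R]_n) (w : 'cV[R]_n) :
  M^T = M -> (forall (l : R) (v : 'rV_n), v *m M = l *: v -> v *m w = 0) -> w = 0.
Proof.
case: n M w => [|n] M w symM w_orth; first exact: flatmx0.
have [rs Mrs] := sym_char_poly_split symM.
apply: (eigen_orth_horner_split_eq0 symM (rs := rs) w_orth).
by rewrite -Mrs Cayley_Hamilton mul0mx.
Qed.

Section StrongCospectrality.
Variable R : realType.

Lemma row_free_mul_tr_unit k p (B : 'M[R]_(k, p)) : row_free B -> B *m B^T \in unitmx.
Proof.
move=> B_free; rewrite -row_free_unit -kermx_eq0; apply/eqP/row_matrixP => i.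
rewrite row0; set u := row i _.
have uBBT : u *m (B *m B^T) = 0 by rewrite /u -row_mul mulmx_ker row0.
have uB : u *m B = 0.
  by apply: self_dot_eq0; rewrite trmx_mul mulmxA -(mulmxA u B) uBBT mul0mx mxE.
by apply/eqP; rewrite -(mulmx_free_eq0 _ B_free) uB.
Qed.

Lemma eigproj_eigenvector n (M : 'M[R]_n) l (v : 'rV_n) :
  v *m M = l *: v -> v *m eigproj M l = v.
Proof.
move=> vM; have : (v <= eigenspace M l)%MS by apply/eigenspaceP.
rewrite -(eq_row_base (eigenspace M l)) => /submxP [c ->].
rewrite /eigproj; have B_free := row_base_free (eigenspace M l).
move: (row_base _) B_free => B B_free.
by rewrite !mulmxA -(mulmxA c) -(mulmxA c (B *m B^T)) mulmxV ?mulmx1 ?row_free_mul_tr_unit.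
Qed.

Lemma strongly_cospectral_eigen_dot n (M : 'M[R]_n) (u mu : 'cV_n) l :
  strongly_cospectral M u mu -> eigenvalue M l ->
  exists2 eps : R, eps != 0 &
    forall w : 'rV_n, w *m M = l *: w -> w *m u = eps *: (w *m mu).
Proof.
move=> SC /SC [eps [eps1 Eu]]; exists eps.
  by case: eps1 => ->; rewrite ?oppr_eq0 oner_eq0.
move=> w wM.
by rewrite -[in LHS](eigproj_eigenvector wM) -mulmxA Eu -scalemxAr mulmxA eigproj_eigenvector.
Qed.

Lemma strongly_cospectral_commute_fixed n (M P : 'M[R]_n) (u mu : 'cV_n) :
  M^T = M -> P *m M = M *m P -> strongly_cospectral M u mu ->
  P *m u = u -> P *m mu = mu.
Proof.
move=> symM PM SC Pu; apply/eqP; rewrite -subr_eq0; apply/eqP.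
apply: (sym_eigen_orth_eq0 symM) => l v vM.
have [->|v_neq0] := eqVneq v 0; first by rewrite mul0mx.
have l_eig : eigenvalue M l by apply/eigenvalueP; exists v.
have [eps eps_neq0 Edot] := strongly_cospectral_eigen_dot SC l_eig.
have vPM : (v *m P) *m M = l *: (v *m P) by rewrite -mulmxA PM mulmxA vM scalemxAl.
have := Edot _ vPM; rewrite -mulmxA Pu Edot // => /(scalerI eps_neq0) vmu.
by rewrite mulmxBr mulmxA -vmu subrr.
Qed.

End StrongCospectrality.

Lemma perm_mx_commute (R : pzRingType) n (g : 'S_n) (M : 'M[R]_n) :
  (forall x y, M (g x) (g y) = M x y) -> perm_mx g *m M = M *m perm_mx g.
Proof.
move=> M_g; rewrite -row_permE -[X in _ = _ *m perm_mx X](invgK g) -col_permE.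
by apply/matrixP => i j; rewrite !mxE -{1}(permKV g j) M_g.
Qed.

Section GraphSymmetries.
Variables (R : realType) (n : nat) (e : rel 'I_n).

Lemma ham_mx_sym h : simple_graph e -> (ham_mx R e h)^T = ham_mx R e h.
Proof.
move=> [e_sym _].
have adjT : (adjmx R e)^T = adjmx R e by apply/matrixP => i j; rewrite !mxE e_sym.
have degT : (degmx R e)^T = degmx R e.
  by apply/matrixP => i j; rewrite !mxE; case: eqVneq => [->|]; rewrite ?mul0r.
by case: h; rewrite /= ?/lapmx ?/slapmx ?raddfB ?raddfD /= adjT ?degT.
Qed.

Lemma graph_autV (g : {perm 'I_n}) : graph_aut e g -> graph_aut e g^-1.
Proof. by move=> g_aut x y; rewrite -g_aut !permKV. Qed.

Lemma ham_mx_perm_commute h (g : {perm 'I_n}) : graph_aut e g ->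
  perm_mx g *m ham_mx R e h = ham_mx R e h *m perm_mx g.
Proof.
move=> g_aut.
have deg_g x : #|[set k | e (g x) k]| = #|[set k | e x k]|.
  by rewrite -(card_preimset _ (@perm_inj _ g)); apply: eq_card => k; rewrite !inE g_aut.
have adjC : perm_mx g *m adjmx R e = adjmx R e *m perm_mx g.
  by apply: perm_mx_commute => x y; rewrite !mxE g_aut.
have degC : perm_mx g *m degmx R e = degmx R e *m perm_mx g.
  by apply: perm_mx_commute => x y; rewrite !mxE (inj_eq (@perm_inj _ g)) deg_g.
by case: h; rewrite /= ?/lapmx ?/slapmx ?mulmxBl ?mulmxBr ?mulmxDl ?mulmxDr adjC ?degC.
Qed.

End GraphSymmetries.

Lemma pair_stateE (R : realType) n s (x y k : 'I_n) :
  pair_state s x y k 0 = (k == x)%:R + s * (k == y)%:R :> R.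
Proof. by rewrite !mxE. Qed.

Lemma perm_mx_pair_state (R : realType) n (g : 'S_n) (s : R) a b :
  perm_mx g^-1 *m pair_state s a b = pair_state s (g a) (g b).
Proof.
by rewrite -row_permE; apply/colP => k; rewrite mxE !pair_stateE !(canF_eq (permKV g)).
Qed.

Lemma pair_state_inj (R : realType) n (s : R) (x y x' y' : 'I_n) :
  s != 0 -> s != 1 -> x != y ->
  pair_state s x y = pair_state s x' y' -> x = x' /\ y = y'.
Proof.
move=> s0 s1 xy /colP E.
have xx' : x = x'.
  move: (E x); rewrite !pair_stateE eqxx (negbTE xy) mulr0 addr0.
  case: eqVneq => // _; case: (x == y'); rewrite ?mulr1 ?mulr0 add0r => /eqP.
    by rewrite eq_sym (negbTE s1).
  by rewrite oner_eq0.
split=> //; move: (E y); rewrite !pair_stateE -xx' eq_sym (negbTE xy) eqxx.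
rewrite mulr1 !add0r; case: eqVneq => // _; rewrite mulr0 => /eqP.
by rewrite (negbTE s0).
Qed.

Lemma pair_state1_eq (R : realType) n (x y x' y' : 'I_n) : x != y -> x' != y' ->
  (pair_state (1 : R) x y == pair_state 1 x' y') = ([set x; y] == [set x'; y']).
Proof.
have E z z' k : z != z' -> pair_state (1 : R) z z' k 0 = (k \in [set z; z'])%:R.
  move=> zz'; rewrite pair_stateE mul1r !inE.
  by case: (eqVneq k z) => [->|_]; rewrite ?eqxx ?(negbTE zz') /= ?addr0 ?add0r.
move=> xy x'y'; apply/eqP/eqP => [/colP xyE|xyE]; last first.
  by apply/colP => k; rewrite !E // xyE.
apply/setP => k; move: (xyE k); rewrite !E // => /eqP; rewrite eqr_nat.
by do 2 case: (k \in _).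
Qed.

Theorem mainTheorem5 (R : realType) (n : nat) (e : rel 'I_n) (h : hamiltonian)
  (s : R) (a b al be : 'I_n) :
  simple_graph e -> s != 0 -> a != b -> al != be ->
  strongly_cospectral (ham_mx R e h) (pair_state s a b) (pair_state s al be) ->
  (s != 1 ->
     forall g : {perm 'I_n}, graph_aut e g -> g a = a -> g b = b ->
       g al = al /\ g be = be) /\
  (s = 1 ->
     forall g : {perm 'I_n}, graph_aut e g -> [set g a; g b] = [set a; b] ->
       [set g al; g be] = [set al; be]).
Proof.
move=> e_simple s0 ab albe SC.
have fixed g : graph_aut e g -> pair_state s (g a) (g b) = pair_state s a b ->
    pair_state s (g al) (g be) = pair_state s al be.
  move=> g_aut; rewrite -!perm_mx_pair_state.
  apply: (strongly_cospectral_commute_fixed (ham_mx_sym R h e_simple) _ SC).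
  exact/ham_mx_perm_commute/graph_autV.
have g_neq (g : {perm 'I_n}) x y : x != y -> g x != g y by rewrite (inj_eq (@perm_inj _ g)).
split=> [s1 g g_aut ga gb | s1 g g_aut gab].
  apply: pair_state_inj s0 s1 (g_neq _ _ _ albe) _.
  by apply: fixed g_aut _; rewrite ga gb.
subst s; have galbe := g_neq g _ _ albe; have gab' := g_neq g _ _ ab.
apply/eqP; rewrite -(pair_state1_eq R) //; apply/eqP/(fixed g g_aut)/eqP.
by rewrite (pair_state1_eq R) // gab eqxx.
Qed.
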